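(* In the setting described in the context, let $D\subseteq A\subseteq D\cup T$. Let $[e_1,e_2]\in T$ and set $A'=A\cup\{[e_1,e_2]\}$. Let $L_1,L_2\in\Pi_A$ be the circuits with $e_1\in L_1$ and $e_2\in L_2$. Then $$\Pi_{A'}=\Pi'\cup\big(\Pi_A\setminus\{L_1,L_2,L^*_{1},L^*_{2}\}\big),$$ where the duals $L_1^*,L_2^*$ are taken with respect to $A$, and $\Pi'$ is given by the following two cases. (i) If $L_1=L_2$, or $L_1=L_1^*$, or $L_2=L_2^*$, then $\Pi'=\{L_1\cup L_1^*\cup L_2\cup L_2^*\}$, and this single circuit is shorted with respect to $A'$. (ii) Otherwise, $\Pi'=\{L_1\cup L_2^*,\ L_1^*\cup L_2\}$; these two circuits are duals of each other with respect to $A'$, and neither is shorted. In addition, if $L_2=L_1^*$ then $\Pi_{A'}=\Pi_A$.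
   Context: Let $n\ge4$, $V=\{0,\dots,n-1\}$, and let $E=\{(u,v)\in V\times V:u\ne v\}$ be the set of arcs, written $uv$. Let $\chi_e\in\mathbb R^E$ be unit vectors and $\chi_F=\sum_{e\in F}\chi_e$. Let $\delta^\pm(w)$ be the arcs leaving/entering $w$, let $\delta^+(S)=\{uv:u\in S,v\notin S\}$, let $\mathcal S=\{S\subset V:2\le|S|\le n-2\}$, and let $x(F)=\sum_{e\in F}x_e$. The polytope is $P^n=\{x\in\mathbb R^E: x(\delta^+(w))=x(\delta^-(w))=1\ \forall w,\ x(\delta^+(S))\ge1\ \forall S\in\mathcal S,\ x\ge0\}$. Fix $\bar x\in P^n\cap\{0,\tfrac12\}^E$ and let $E_{\bar x}=\{e:\bar x_e=\tfrac12\}$. For $a\in\{0,1\}^E$ let $\mathrm{pr}(a)=\sum_{e\in E_{\bar x}}a_e\chi_e$. Let $\mathcal S_{\bar x}=\{S\in\mathcal S:\bar x(\delta^+(S))=1\}$. Define the sets $$D=\{\mathrm{pr}(\chi_{\delta^+(u)}),\mathrm{pr}(\chi_{\delta^-(u)}):u\in V\}, \qquad T=\{\mathrm{pr}(\chi_{\delta^+(S)}):S\in\mathcal S_{\bar x}\}.$$ Every vector of $D\cup T$ equals $\chi_{e_1}+\chi_{e_2}$ for two distinct arcs $e_1,e_2\in E_{\bar x}$; it is written $[e_1,e_2]=[e_2,e_1]$. Let $A$ be a set with $D\subseteq A\subseteq D\cup T$. On $E_{\bar x}$ define the relation $e\sim_A e'$ iff there is $\bar e\in E_{\bar x}$ with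 $[e,\bar e]\in A$ and $[\bar e,e']\in A$. Let $\equiv_A$ be its transitive closure; this is an equivalence relation. The equivalence classes are called circuits, and they form the circuit partition $\Pi_A$ of $E_{\bar x}$. For $L\in\Pi_A$, the set $\{\bar e\in E_{\bar x}:\exists e\in L,\ [e,\bar e]\in A\}$ is nonempty and contained in a unique circuit, denoted $L^*_A$ and called the dual of $L$. The pair $\{L,L^*_A\}$ is a circuit pair. $L$ is called shorted if $L^*_A=L$. Define $\langle L,L^*\rangle_A=\{[e,\bar e]\in A: e\in L,\ \bar e\in L^*_A\}$. *)

From HB Require Import structures.
From mathcomp Require Import all_boot all_order all_algebra.
Set Implicit Arguments. Unset Strict Implicit. Unset Printing Implicit Defensive.
Import Order.TTheory GRing.Theory Num.Theory.
Local Open Scope ring_scope.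

Definition darc (n : nat) : finType := {p : 'I_n * 'I_n | p.1 != p.2}.

Section Defs.
Variable n : nat.
Implicit Types (x : {ffun darc n -> rat}) (F : {set darc n}) (S : {set 'I_n}).

Definition atail (e : darc n) : 'I_n := (val e).1.
Definition ahead (e : darc n) : 'I_n := (val e).2.

Definition outarcs (w : 'I_n) : {set darc n} := [set e | atail e == w].
Definition inarcs (w : 'I_n) : {set darc n} := [set e | ahead e == w].
Definition cut S : {set darc n} := [set e | (atail e \in S) && (ahead e \notin S)].

Definition xsum x F : rat := \sum_(e in F) x e.

Definition calS S : bool := (2 <= #|S|)%N && (#|S| <= n - 2)%N.

Definition inP x : Prop :=
  [/\ forall w : 'I_n, xsum x (outarcs w) = 1 /\ xsum x (inarcs w) = 1,
      forall S, calS S -> 1 <= xsum x (cut S)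
    & forall e, 0 <= x e].

Definition Ex x : {set darc n} := [set e | x e == 1 / 2%:R].

(* A 0/1 vector a in R^E is encoded by its support {e | a_e = 1}.
   pr(chi_F) is then encoded by F :&: E_xbar, and [e1,e2] by [set e1; e2]. *)
Definition pr x F : {set darc n} := F :&: Ex x.

Definition Sx x : {set {set 'I_n}} := [set S | calS S && (xsum x (cut S) == 1)].

Definition Dset x : {set {set darc n}} :=
  [set pr x (outarcs u) | u : 'I_n] :|: [set pr x (inarcs u) | u : 'I_n].

Definition Tset x : {set {set darc n}} := [set pr x (cut S) | S in Sx x].

Definition simA x (A : {set {set darc n}}) : rel (darc n) :=
  fun e e' => [&& e \in Ex x, e' \in Ex x &
     [exists eb in Ex x, ([set e; eb] \in A) && ([set eb; e'] \in A)]].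

Definition Pi x (A : {set {set darc n}}) : {set {set darc n}} :=
  equivalence_partition (connect (simA x A)) (Ex x).

Definition nbrs x (A : {set {set darc n}}) (L : {set darc n}) : {set darc n} :=
  [set eb in Ex x | [exists e in L, [set e; eb] \in A]].

Definition dual x (A : {set {set darc n}}) (L : {set darc n}) : {set darc n} :=
  odflt set0 [pick L' in Pi x A | nbrs x A L \subset L'].

Definition shorted x (A : {set {set darc n}}) (L : {set darc n}) : bool :=
  dual x A L == L.

End Defs.

(* Circuits are the classes of the two-step relation of the graph on the half-arcs
   whose edges are the pairs of A.  If f is paired with e, g with e', and e, e'
   lie in one circuit, then f and g lie in one circuit; so the partners of the
   arcs of a circuit L form one circuit L*, found from any single pair.  The new
   pair [e1,e2] creates exactly the two-step paths from e1 to the partners of e2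
   and from e2 to the partners of e1: it glues X = L1 u L2* and Y = L1* u L2 and
   leaves every other circuit alone.  X and Y meet exactly in the cases of (i),
   and then form one circuit, its own dual since e1 and e2 are now paired;
   otherwise X and Y are the two new circuits, dual to each other through
   [e1,e2].  When L2 = L1* also L2* = L1, so X = L1 and Y = L2 are old circuits. *)

From HB Require Import structures.
From mathcomp Require Import all_boot all_order all_algebra.
From mathcomp Require Import lra.
Import Order.TTheory GRing.Theory Num.Theory.
Set Implicit Arguments. Unset Strict Implicit. Unset Printing Implicit Defensive.
Local Open Scope ring_scope.

Section TwoStep.
Variables (T : finType) (V : {set T}) (adj : rel T).
Hypotheses (adjC : symmetric adj) (adj_memV : forall a b, adj a b -> a \in V).

Definition two_step : rel T := fun a c => [exists b, adj a b && adj b c].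

Definition circuit a : {set T} := [set c in V | connect two_step a c].

Definition circuits : {set {set T}} := equivalence_partition (connect two_step) V.

Lemma circuitsE : circuits = [set circuit a | a in V].
Proof. by []. Qed.

Lemma two_stepC : symmetric two_step.
Proof.
by move=> a c; apply/existsP/existsP=> -[b /andP[ab bc]]; exists b;
  rewrite adjC bc adjC ab.
Qed.

Lemma connect_two_step_sym : connect_sym two_step.
Proof. exact: sym_connect_sym two_stepC. Qed.

Lemma adj_memVr a b : adj a b -> b \in V.
Proof. by rewrite adjC; apply: adj_memV. Qed.

Lemma two_step_closedV : closed two_step V.
Proof.
move=> a c /existsP[b /andP[ab bc]].
by rewrite (adj_memV ab) (adj_memVr bc).
Qed.

(* This is what makes the dual of a circuit well defined. *)
Lemma adj_connect_adj f e e' g :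
  adj f e -> connect two_step e e' -> adj e' g -> connect two_step f g.
Proof.
move=> fe /connectP[p ep ->] {e'}.
elim: p e f fe ep => [|b p IHp] e f fe /= ep lg.
  by apply: connect1; apply/existsP; exists e; rewrite fe lg.
case/andP: ep => /existsP[c /andP[ec cb]] bp.
apply: connect_trans (connect1 _) (IHp b c cb bp lg).
by apply/existsP; exists e; rewrite fe ec.
Qed.

Lemma mem_circuit a : a \in V -> a \in circuit a.
Proof. by move=> aV; rewrite inE aV connect0. Qed.

Lemma circuit_sub a : circuit a \subset V.
Proof. by apply/subsetP=> c; rewrite inE => /andP[]. Qed.

Lemma circuit_closed a : closed two_step (circuit a).
Proof.
move=> u v uv; rewrite !inE (two_step_closedV uv); congr (_ && _).
exact: (connect_closed connect_two_step_sym a uv).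
Qed.

Lemma circuit_connect a b : connect two_step a b -> circuit a = circuit b.
Proof.
move=> ab; apply/setP=> c; rewrite !inE; congr (_ && _).
by apply/idP/idP=> h; [rewrite connect_two_step_sym in ab|];
  apply: connect_trans ab h.
Qed.

Lemma same_circuit a b : b \in circuit a -> circuit b = circuit a.
Proof. by rewrite inE connect_two_step_sym => /andP[_ /circuit_connect]. Qed.

Lemma connect_circuit a b :
  b \in V -> circuit a = circuit b -> connect two_step a b.
Proof. by move=> bV ab; have := mem_circuit bV; rewrite -ab inE => /andP[]. Qed.

Lemma circuit_adj a z f : adj a z -> adj a f -> z \in circuit f.
Proof.
move=> az af; rewrite inE (adj_memVr az).
by apply: adj_connect_adj az; rewrite // adjC.
Qed.

Lemma mem_circuitE a b : a \in V -> (a \in circuit b) = (circuit a == circuit b).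
Proof. by move=> aV; apply/idP/eqP=> [/same_circuit | <-]; last exact: mem_circuit. Qed.

Lemma circuit_meet u a b :
  u \in circuit a -> u \in circuit b -> circuit a = circuit b.
Proof. by move=> /same_circuit <- /same_circuit. Qed.

(* In terms of duals: if circuit b is the dual of circuit a, then conversely. *)
Lemma circuit_adj_sym a f b g :
  adj a f -> adj b g -> circuit b = circuit f -> circuit g = circuit a.
Proof.
move=> af bg bf; apply: circuit_connect; apply: (@adj_connect_adj g b f a).
- by rewrite adjC.
- exact: connect_circuit (adj_memVr af) bf.
- by rewrite adjC.
Qed.

Lemma circuit_eq_closed a (B : {set T}) :
  a \in B -> B \subset V -> closed two_step B ->
  {subset B <= connect two_step a} -> circuit a = B.
Proof.
move=> aB BV clB Ba; apply/setP=> c; rewrite inE.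
apply/idP/idP=> [/andP[_ ac]|cB]; first by rewrite -(closed_connect clB ac).
by rewrite (subsetP BV _ cB); apply: Ba.
Qed.

Lemma circuits_partition : partition circuits V.
Proof.
apply: equivalence_partitionP => u v w _ _ _; split=> // uv.
by apply/idP/idP; apply: connect_trans; rewrite // connect_two_step_sym.
Qed.

Lemma pblock_circuits a : a \in V -> pblock circuits a = circuit a.
Proof.
move=> aV; have [_ tiP _] := and3P circuits_partition.
exact: def_pblock tiP (imset_f _ aV) (mem_circuit aV).
Qed.

Lemma pick_circuit (N : {set T}) f :
  f \in N -> N \subset circuit f ->
  odflt set0 [pick L in circuits | N \subset L] = circuit f.
Proof.
move=> fN Nf; have fV := subsetP (circuit_sub f) _ (subsetP Nf _ fN).
case: pickP => [L /andP[PL NL] | /(_ (circuit f))] /=; last first.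
  by rewrite circuitsE imset_f // Nf.
have [_ tiP _] := and3P circuits_partition.
by rewrite -(def_pblock tiP PL (subsetP NL _ fN)) pblock_circuits.
Qed.

End TwoStep.

Lemma closedU (T : finType) (e : rel T) (A B : {set T}) :
  closed e A -> closed e B -> closed e (A :|: B).
Proof. by move=> clA clB u v uv; rewrite !in_setU (clA _ _ uv) (clB _ _ uv). Qed.

Section AddPair.
Variables (T : finType) (V : {set T}) (adj adj' : rel T) (e1 e2 f1 f2 : T).
Hypotheses (adjC : symmetric adj) (adj_memV : forall a b, adj a b -> a \in V).
Hypothesis adj'E :
  forall a b, adj' a b = adj a b || ((a, b) \in [:: (e1, e2); (e2, e1)]).
Hypotheses (e1V : e1 \in V) (e2V : e2 \in V) (e1f1 : adj e1 f1) (e2f2 : adj e2 f2).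

Local Notation K := (circuit V adj).
Local Notation K' := (circuit V adj').
Local Notation X := (K e1 :|: K f2).
Local Notation Y := (K f1 :|: K e2).

Lemma adj'P a b :
  reflect [\/ adj a b, a = e1 /\ b = e2 | a = e2 /\ b = e1] (adj' a b).
Proof.
rewrite adj'E mem_seq2 !xpair_eqE.
apply: (iffP or3P) => [[|/andP[/eqP-> /eqP->]|/andP[/eqP-> /eqP->]]|
  [|[-> ->]|[-> ->]]]; rewrite ?eqxx;
  by [constructor 1 | constructor 2 | constructor 3].
Qed.

Lemma adj'C : symmetric adj'.
Proof.
move=> a b; apply/adj'P/adj'P => -[ab|[-> ->]|[-> ->]];
  by [constructor 1; rewrite adjC | constructor 3 | constructor 2].
Qed.

Lemma connect_add : subrel (connect (two_step adj)) (connect (two_step adj')).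
Proof.
apply: connect_sub => u v /existsP[b /andP[ub bv]]; apply: connect1.
by apply/existsP; exists b; apply/andP; split; apply/adj'P; constructor 1.
Qed.

Lemma mem_e1X : e1 \in X. Proof. by rewrite in_setU mem_circuit. Qed.
Lemma mem_e2Y : e2 \in Y. Proof. by rewrite in_setU mem_circuit ?orbT. Qed.

Lemma adj'_e1_Y a : adj' a e1 -> a \in Y.
Proof.
case/adj'P=> [ae1|[-> ->]|[-> _]]; try exact: mem_e2Y.
by rewrite in_setU (circuit_adj adjC adj_memV _ e1f1) // adjC.
Qed.

Lemma adj'_e2_X a : adj' a e2 -> a \in X.
Proof.
case/adj'P=> [ae2|[-> _]|[-> ->]]; try exact: mem_e1X.
by rewrite in_setU (circuit_adj adjC adj_memV _ e2f2) ?orbT // adjC.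
Qed.

Lemma adj'_notin_pair a b : a != e1 -> a != e2 -> adj' a b = adj a b.
Proof.
by move=> ae1 ae2; rewrite adj'E mem_seq2 !xpair_eqE (negbTE ae1) (negbTE ae2) orbF.
Qed.

(* A new two-step path passes through e1 or e2, whose partners all lie in Y, resp. X. *)
Lemma two_step_addP u v : two_step adj' u v ->
  [\/ two_step adj u v, (u \in X) && (v \in X) | (u \in Y) && (v \in Y)].
Proof.
case/existsP=> b /andP[ub bv].
have [be1|ne1] := eqVneq b e1.
  by apply/Or33/andP; rewrite !adj'_e1_Y // -be1 // adj'C.
have [be2|ne2] := eqVneq b e2.
  by apply/Or32/andP; rewrite !adj'_e2_X // -be2 // adj'C.
apply/Or31/existsP; exists b.
by rewrite [adj u b]adjC -!(adj'_notin_pair _ ne1 ne2) adj'C ub.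
Qed.

Lemma closed_add (B : {set T}) :
  closed (two_step adj) B ->
  {in B, forall u, u \in X -> X \subset B} ->
  {in B, forall u, u \in Y -> Y \subset B} ->
  closed (two_step adj') B.
Proof.
move=> clB XB YB u v /two_step_addP[/clB // | /andP[uX vX] | /andP[uY vY]].
  by apply/idP/idP=> [/XB/(_ uX)/subsetP|/XB/(_ vX)/subsetP]; apply.
by apply/idP/idP=> [/YB/(_ uY)/subsetP|/YB/(_ vY)/subsetP]; apply.
Qed.

Lemma connect_add_X a : a \in X -> connect (two_step adj') e1 a.
Proof.
have e1f2 : connect (two_step adj') e1 f2.
  apply: connect1; apply/existsP; exists e2.
  by rewrite !adj'E e2f2 mem_seq2 eqxx orbT.
case/setUP; rewrite inE => /andP[_ /connect_add]//.
exact: connect_trans.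
Qed.

Lemma connect_add_Y a : a \in Y -> connect (two_step adj') e2 a.
Proof.
have e2f1 : connect (two_step adj') e2 f1.
  apply: connect1; apply/existsP; exists e1.
  by rewrite !adj'E e1f1 mem_seq2 !eqxx !orbT.
case/setUP; rewrite inE => /andP[_ /connect_add]//.
exact: connect_trans.
Qed.

Lemma X_sub : X \subset V. Proof. by rewrite subUset !circuit_sub. Qed.
Lemma Y_sub : Y \subset V. Proof. by rewrite subUset !circuit_sub. Qed.

Lemma closed_X : closed (two_step adj) X.
Proof. by apply: closedU; apply: circuit_closed. Qed.

Lemma closed_Y : closed (two_step adj) Y.
Proof. by apply: closedU; apply: circuit_closed. Qed.

Lemma circuit_add_out a : a \in V -> a \notin X :|: Y -> K' a = K a.
Proof.
move=> aV aXY; have aK := mem_circuit adj aV.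
have outK c : {in K a, forall u, u \in K c -> a \in K c}.
  by move=> u ua uc; rewrite -(circuit_meet adjC ua uc).
apply: circuit_eq_closed; rewrite ?circuit_sub //.
- apply: closed_add (circuit_closed adjC adj_memV a) _ _ => u ua uXY;
  by case/negP: aXY; rewrite !in_setU; case/setUP: uXY => /(outK _ _ ua) ->;
    rewrite ?orbT.
- by move=> b; rewrite inE => /andP[_ /connect_add].
Qed.

Lemma circuit_add_e1 : [disjoint X & Y] -> K' e1 = X.
Proof.
move=> XY; apply: circuit_eq_closed mem_e1X X_sub _ connect_add_X.
apply: closed_add closed_X _ _ => u uX uY; first exact: subxx.
by rewrite (disjointFr XY uX) in uY.
Qed.

Lemma circuit_add_e2 : [disjoint X & Y] -> K' e2 = Y.
Proof.
move=> XY; apply: circuit_eq_closed mem_e2Y Y_sub _ connect_add_Y.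
apply: closed_add closed_Y _ _ => u uY uX; last exact: subxx.
by rewrite (disjointFr XY uX) in uY.
Qed.

Lemma connect_add_e1e2 : ~~ [disjoint X & Y] -> connect (two_step adj') e1 e2.
Proof.
case/pred0Pn=> u /andP[/= uX uY]; apply: connect_trans (connect_add_X uX) _.
by rewrite connect_two_step_sym ?connect_add_Y //; apply: adj'C.
Qed.

Lemma circuit_add_merged : ~~ [disjoint X & Y] -> K' e1 = X :|: Y.
Proof.
move=> XY; apply: circuit_eq_closed.
- by rewrite in_setU mem_e1X.
- by rewrite subUset X_sub Y_sub.
- by apply: closed_add (closedU closed_X closed_Y) _ _ => u _ _;
    [exact: subsetUl | exact: subsetUr].
- move=> a /setUP[/connect_add_X // | /connect_add_Y].
  exact: connect_trans (connect_add_e1e2 XY).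
Qed.

Lemma circuit_add_X a : a \in X -> K' a = K' e1.
Proof.
move/connect_add_X => e1a; apply/esym/(circuit_connect _ adj'C e1a).
Qed.

Lemma circuit_add_Y a : a \in Y -> K' a = K' e2.
Proof.
move/connect_add_Y => e2a; apply/esym/(circuit_connect _ adj'C e2a).
Qed.

Lemma mem_XY a : a \in V ->
  (a \in X :|: Y) = (K a \in [set K e1; K e2; K f1; K f2]).
Proof.
move=> aV; rewrite !in_setU !mem_circuitE // !inE.
by case: (K a == K e1); case: (K a == K e2); case: (K a == K f1); case: (K a == K f2).
Qed.

Lemma circuits_add : circuits V adj' =
  [set K' e1; K' e2] :|: (circuits V adj :\: [set K e1; K e2; K f1; K f2]).
Proof.
rewrite !circuitsE; apply/setP=> L; rewrite in_setU in_setD.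
apply/imsetP/idP=> [[a aV ->] | ].
  have [aX|aX] := boolP (a \in X); first by rewrite circuit_add_X ?set21.
  have [aY|aY] := boolP (a \in Y); first by rewrite circuit_add_Y ?set22.
  have aXY : a \notin X :|: Y by rewrite in_setU negb_or aX aY.
  by rewrite circuit_add_out // -mem_XY // aXY imset_f ?orbT.
case/orP=> [/set2P[-> | ->] | /andP[aXY /imsetP[a aV defL]]];
  [by exists e1 | by exists e2 | subst L].
by exists a => //; rewrite circuit_add_out // mem_XY.
Qed.

Lemma merged_iff :
  K e1 = K e2 \/ K e1 = K f1 \/ K e2 = K f2 <-> ~~ [disjoint X & Y].
Proof.
have meet u : u \in X -> u \in Y -> ~~ [disjoint X & Y].
  by move=> uX uY; apply/pred0Pn; exists u; rewrite /= uX uY.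
split=> [[e12 | [e1f1' | e2f2']] | /pred0Pn[u /andP[/= uX uY]]].
- by apply: (meet e1 mem_e1X); rewrite in_setU -e12 mem_circuit ?orbT.
- by apply: (meet e1 mem_e1X); rewrite in_setU -e1f1' mem_circuit.
- by apply: (meet e2 _ mem_e2Y); rewrite in_setU -e2f2' mem_circuit ?orbT.
case/setUP: uX => uX; case/setUP: uY => uY.
- by right; left; exact: (circuit_meet adjC uX uY).
- by left; exact: (circuit_meet adjC uX uY).
- left; have f2e2 : adj f2 e2 by rewrite adjC.
  exact/esym/(circuit_adj_sym adjC adj_memV e1f1 f2e2 (circuit_meet adjC uX uY)).
- by right; right; apply/esym/(circuit_meet adjC uX uY).
Qed.

Lemma circuits_add_merged : ~~ [disjoint X & Y] ->
  let M := K e1 :|: K f1 :|: K e2 :|: K f2 in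
  [/\ circuits V adj' = M |: (circuits V adj :\: [set K e1; K e2; K f1; K f2]),
      K' e1 = M & K' e2 = M].
Proof.
move=> XY M; have K'e1 : K' e1 = M.
  by rewrite circuit_add_merged // setUACA [K f2 :|: _]setUC setUA.
have K'e2 : K' e2 = M.
  by rewrite -K'e1; apply/esym/circuit_connect/connect_add_e1e2 => //; apply: adj'C.
by rewrite circuits_add K'e1 K'e2 setUid.
Qed.

Lemma circuits_add_disjoint : [disjoint X & Y] ->
  [/\ circuits V adj' = [set X; Y] :|: (circuits V adj :\: [set K e1; K e2; K f1; K f2]),
      K' e1 = X, K' e2 = Y & X != Y].
Proof.
move=> XY; rewrite circuits_add circuit_add_e1 // circuit_add_e2 //; split=> //.
by apply/eqP=> XeY; move: (disjointFr XY mem_e1X); rewrite -XeY mem_e1X.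
Qed.

Lemma circuits_add_dual :
  K e2 = K f1 -> circuits V adj' = circuits V adj.
Proof.
move=> e2f1; have f2e1 : K f2 = K e1.
  exact: (circuit_adj_sym adjC adj_memV e1f1 e2f2 e2f1).
rewrite !circuitsE; apply: eq_in_imset => a aV.
apply: circuit_eq_closed (mem_circuit _ aV) (circuit_sub _ _ _) _ _.
- apply: closed_add (circuit_closed adjC adj_memV a) _ _ => u ua;
    rewrite ?f2e1 -?e2f1 setUid => uK; by rewrite (circuit_meet adjC ua uK).
- by move=> b; rewrite inE => /andP[_ /connect_add].
Qed.

End AddPair.

Lemma eq_set2 (T : finType) (a b c d : T) :
  ([set a; b] == [set c; d]) = ((a, b) \in [:: (c, d); (d, c)]).
Proof.
rewrite mem_seq2 !xpair_eqE; apply/eqP/idP => [abcd | ]; last first.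
  by case/orP=> /andP[/eqP-> /eqP->] //; rewrite setUC.
have [/set2P ac /set2P bc] : a \in [set c; d] /\ b \in [set c; d].
  by rewrite -abcd set21 set22.
have [/set2P ca /set2P da] : c \in [set a; b] /\ d \in [set a; b].
  by rewrite abcd set21 set22.
case: ac bc ca da => -> [] -> ca da; rewrite ?eqxx ?orbT //.
  by case: da => ->; rewrite eqxx.
by case: ca => ->; rewrite eqxx.
Qed.

Section HalfIntegralPoint.
Variables (n : nat) (x : {ffun darc n -> rat}).

Definition paired (A : {set {set darc n}}) : rel (darc n) :=
  fun a b => [&& a \in Ex x, b \in Ex x & [set a; b] \in A].

Lemma pairedC A : symmetric (paired A).
Proof. by move=> a b; rewrite /paired setUC andbCA. Qed.

Lemma paired_memE A a b : paired A a b -> a \in Ex x.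
Proof. by case/and3P. Qed.

Lemma paired_add A e1 e2 : e1 \in Ex x -> e2 \in Ex x -> forall a b,
  paired ([set e1; e2] |: A) a b = paired A a b || ((a, b) \in [:: (e1, e2); (e2, e1)]).
Proof.
move=> e1E e2E a b; rewrite /paired in_setU1 -eq_set2.
have [ab|_] := eqVneq [set a; b] [set e1; e2]; last by rewrite orbF.
rewrite orTb orbT andbT; move/eqP: ab; rewrite eq_set2 mem_seq2 !xpair_eqE.
by case/orP=> /andP[/eqP-> /eqP->]; rewrite e1E e2E.
Qed.

Lemma Tset_subset F : F \in Tset x -> F \subset Ex x.
Proof. by case/imsetP=> S _ ->; apply: subsetIr. Qed.

Lemma simA_two_step A : simA x A =2 two_step (paired A).
Proof.
move=> a c; apply/and3P/existsP => [[aE cE /existsP[b /and3P[bE ab bc]]] |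
                                    [b /andP[/and3P[aE bE ab] /and3P[_ cE bc]]]].
  by exists b; rewrite /paired aE bE cE ab bc.
by split=> //; apply/existsP; exists b; rewrite bE ab bc.
Qed.

Lemma Pi_circuits A : Pi x A = circuits (Ex x) (paired A).
Proof.
rewrite /Pi /circuits /equivalence_partition; apply: eq_imset => a.
by apply/setP=> b; rewrite !inE (eq_connect (simA_two_step A)).
Qed.

Lemma dual_circuit A a f : paired A a f ->
  dual x A (circuit (Ex x) (paired A) a) = circuit (Ex x) (paired A) f.
Proof.
move=> af; have [aE fE _] := and3P af.
rewrite /dual Pi_circuits; apply: (pick_circuit (pairedC A)).
  by rewrite inE fE; apply/existsP; exists a; rewrite mem_circuit //; case/and3P: af.
apply/subsetP=> b; rewrite inE => /andP[bE /existsP[e /andP[eK eb]]].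
have eE := subsetP (circuit_sub _ _ a) _ eK.
rewrite inE bE; apply: (adj_connect_adj (e := a) (e' := e)).
- by rewrite pairedC.
- by move: eK; rewrite inE => /andP[].
- by rewrite /paired eE bE.
Qed.

Hypotheses (hxP : inP x) (hx01 : forall e, x e = 0 \/ x e = 1 / 2%:R).

Lemma card_pr_tight F : xsum x F = 1 -> #|pr x F| = 2%N.
Proof.
have out0 : \sum_(e in F :\: Ex x) x e = 0.
  apply: big1 => e; rewrite !inE => /andP[eE _].
  by case: (hx01 e) => // xe; rewrite xe eqxx in eE.
rewrite /xsum (big_setID (Ex x)) /= out0 addr0.
rewrite (eq_bigr (fun=> 1 / 2%:R)) => [|e]; last by rewrite !inE => /andP[_ /eqP].
rewrite sumr_const -mulr_natr => half.
have : (#|F :&: Ex x|%:R : rat) = 2%:R by lra.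
by move/eqP; rewrite eqr_nat => /eqP.
Qed.

(* The out-star of the tail of e carries exactly one other half-arc. *)
Lemma paired_total (A : {set {set darc n}}) e :
  Dset x \subset A -> e \in Ex x -> exists f, paired A e f.
Proof.
move=> DA eE; set S := pr x (outarcs (atail e)).
have SA : S \in A.
  by apply: (subsetP DA); rewrite in_setU (imset_f (fun u => pr x (outarcs u))).
have /eqP/cards2P[a [b [_ Sab]]] : #|S| = 2%N.
  by apply: card_pr_tight; case: hxP => deg _ _; case: (deg (atail e)).
have eS : e \in S by rewrite /S /pr in_setI eE inE eqxx.
have SE : {subset S <= Ex x} by move=> c; rewrite inE => /andP[].
move: (eS); rewrite Sab => /set2P[ea|eb]; subst e.
  by exists b; rewrite /paired -Sab SA !SE // Sab set22.
by exists a; rewrite /paired setUC -Sab SA !SE // Sab set21.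
Qed.

End HalfIntegralPoint.

Unset Implicit Arguments.

Theorem mainTheorem6 (n : nat) (hn : (4 <= n)%N) (x : {ffun darc n -> rat})
  (hxP : inP x) (hx01 : forall e, x e = 0 \/ x e = 1 / 2%:R)
  (A : {set {set darc n}})
  (hDA : Dset x \subset A) (hAT : A \subset Dset x :|: Tset x)
  (e1 e2 : darc n) (he : [set e1; e2] \in Tset x) :
  let A' := [set e1; e2] |: A in
  let L1 := pblock (Pi x A) e1 in
  let L2 := pblock (Pi x A) e2 in
  let L1s := dual x A L1 in
  let L2s := dual x A L2 in
  let rest := Pi x A :\: [set L1; L2; L1s; L2s] in
  [/\ (L1 = L2 \/ L1 = L1s \/ L2 = L2s) ->
        let M := L1 :|: L1s :|: L2 :|: L2s in
        Pi x A' = M |: rest /\ shorted x A' M,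
      ~ (L1 = L2 \/ L1 = L1s \/ L2 = L2s) ->
        let M1 := L1 :|: L2s in
        let M2 := L1s :|: L2 in
        [/\ Pi x A' = [set M1; M2] :|: rest,
            dual x A' M1 = M2, dual x A' M2 = M1,
            ~~ shorted x A' M1 & ~~ shorted x A' M2]
    & L2 = L1s -> Pi x A' = Pi x A].
Proof.
move=> A' L1 L2 L1s L2s rest.
have e1E := subsetP (Tset_subset he) _ (set21 e1 e2).
have e2E := subsetP (Tset_subset he) _ (set22 e1 e2).
have [f1 e1f1] := paired_total hxP hx01 hDA e1E.
have [f2 e2f2] := paired_total hxP hx01 hDA e2E.
have addE := paired_add A e1E e2E.
have e1e2 : paired x A' e1 e2 by rewrite addE mem_seq2 eqxx orbT.
have e2e1 : paired x A' e2 e1 by rewrite pairedC.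
have C := pairedC x A; have pE := @paired_memE n x A.
rewrite /rest /L1s /L2s /L1 /L2 !Pi_circuits !(pblock_circuits C) //.
rewrite (dual_circuit e1f1) (dual_circuit e2f2).
set K := circuit (Ex x) (paired x A).
split=> [/(merged_iff C pE e1E e2E e1f1 e2f2) XY | nXY | e2f1].
- have [-> K'e1 K'e2] := circuits_add_merged C pE addE e1E e2E e1f1 e2f2 XY.
  by rewrite /shorted -K'e1 (dual_circuit e1e2) K'e2 K'e1.
- have XY : [disjoint K e1 :|: K f2 & K f1 :|: K e2].
    by apply/negPn/negP => /(merged_iff C pE e1E e2E e1f1 e2f2).
  have [-> K'e1 K'e2 M12] :=
    circuits_add_disjoint C pE addE e1E e2E e1f1 e2f2 XY.
  rewrite /shorted -K'e1 -K'e2 (dual_circuit e1e2) (dual_circuit e2e1).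
  by rewrite K'e1 K'e2 eq_sym M12.
- exact: circuits_add_dual C pE addE e1E e2E e1f1 e2f2 e2f1.
Qed.
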